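(* Let $G$ be a graph with vertex set $V$, each vertex carrying a finite-dimensional Hilbert space, let $\alpha$ be a QCA of range $R$, let $F\subseteq V$, and let $\mathcal{P}(\alpha,F)$ be the commutant of $\mathcal{A}(\mathrm{Int}(F))$ in $\alpha(\mathcal{A}(F))$. Then $\mathcal{P}(\alpha,F)$ is a $2R$-visibly simple algebra.
   Context: For a set $S$ of sites, $\mathcal{A}(S)$ is the algebra of operators supported on $S$ (operators on $\bigotimes_{x\in S}\mathcal{H}_x$ tensored with the identity); the support of an operator is the minimal such set (scalars have empty support). A QCA of range $R$ is a $*$-automorphism $\alpha$ of the full operator algebra such that for each site $x$ and each $O$ supported on $\{x\}$, $\alpha(O)$ is supported on sites within graph distance $R$ of $x$. $\mathrm{Int}(F)=\{x: \text{all sites within distance } R \text{ of } x \text{ lie in } F\}$. An algebra $\mathcal{A}$ is $l$-visibly simple if for every $O\in\mathcal{A}$ and every site $x$ in the support of $O$ there is $P\in\mathcal{A}$ supported within distance $l$ of $x$ with $[O,P]\ne0$. *)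

From HB Require Import structures.
From mathcomp Require Import all_boot all_order all_algebra.
Set Implicit Arguments. Unset Strict Implicit. Unset Printing Implicit Defensive.
Import Order.TTheory GRing.Theory Num.Theory.
Local Open Scope ring_scope.

Section QCA.
Variables (C : numClosedFieldType) (V : finType) (d : V -> nat).

(* Basis configurations of the total Hilbert space  (x) _{x in V} C^(d x). *)
Definition cfg := {dffun forall x : V, 'I_(d x)}.

Definition op := cfg -> cfg -> C.

Definition opmul (A B : op) : op := fun s t => \sum_(u : cfg) A s u * B u t.
Definition opadd (A B : op) : op := fun s t => A s t + B s t.
Definition opscale (c : C) (A : op) : op := fun s t => c * A s t.
Definition opadj (A : op) : op := fun s t => Num.conj (A t s).

Definition agree_off (S : {set V}) (s t : cfg) : bool :=
  [forall x, (x \notin S) ==> (s x == t x)].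
Definition agree_on (S : {set V}) (s t : cfg) : bool :=
  [forall x, (x \in S) ==> (s x == t x)].

(* O is in A(S), i.e. O = O' (x) Id_{V \ S}. *)
Definition supported (S : {set V}) (O : op) : bool :=
  [forall s, forall t, agree_off S s t || (O s t == 0)] &&
  [forall s, forall t, forall s', forall t',
     [&& agree_off S s t, agree_off S s' t', agree_on S s s' & agree_on S t t']
       ==> (O s t == O s' t')].

Definition supp (O : op) : {set V} := \bigcap_(S : {set V} | supported S O) S.

Definition star_automorphism (a : op -> op) : Prop :=
  [/\ forall A B, a (opadd A B) = opadd (a A) (a B),
      forall c A, a (opscale c A) = opscale c (a A),
      forall A B, a (opmul A B) = opmul (a A) (a B),
      forall A, a (opadj A) = opadj (a A)
    & bijective a].

Variable e : rel V.

Fixpoint ball (n : nat) (x : V) : {set V} :=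
  match n with
  | 0 => [set x]
  | n'.+1 => ball n' x :|: [set y | [exists z in ball n' x, e z y]]
  end.

Definition Int (R : nat) (F : {set V}) : {set V} := [set x | ball R x \subset F].

Definition qca (R : nat) (a : op -> op) : Prop :=
  star_automorphism a /\
  forall (x : V) (O : op), supported [set x] O -> supported (ball R x) (a O).

Definition Palg (R : nat) (a : op -> op) (F : {set V}) (O : op) : Prop :=
  (exists O', supported F O' /\ a O' = O) /\
  forall P, supported (Int R F) P -> opmul O P = opmul P O.

Definition visibly_simple (l : nat) (Alg : op -> Prop) : Prop :=
  forall O, Alg O -> forall x, x \in supp O ->
    exists P, [/\ Alg P, supported (ball l x) P & opmul O P <> opmul P O].

End QCA.

From mathcomp Require Import all_boot all_order all_algebra.
From Stdlib Require Import FunctionalExtensionality Classical.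
Set Implicit Arguments. Unset Strict Implicit. Unset Printing Implicit Defensive.
Import GRing.Theory.
Local Open Scope ring_scope.

(* The tool is slicing: an operator acting trivially on the sites [G] commutes with [X]
   iff it commutes with every partial matrix element [<p_G| X |q_G>] of [X] along [G].
   Let [O = a Y] lie in P(a, F), with [Y] in A(F), and let [x] be in the support of [O].
   Then [O] fails to commute with some matrix unit [E] at [x], so [Y] fails to commute
   with [b E], which is supported in [ball R x] ([b] the inverse of [a]).  [Y] acts
   trivially on [ball R x \ F], so some slice [S] of [b E] along it still fails to commute
   with [Y]; [S] is supported in [ball R x] and in [F].  Hence [a S] lies in a(A(F)), is
   supported in [ball 2R x], and fails to commute with [O].  Being in the commutant of
   A(Int F), [O] acts trivially on [Int F], so some slice [P] of [a S] along [Int F] fails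
   to commute with [O]; [P] is still in a(A(F)) and is supported off [Int F], so it
   commutes with A(Int F): [P] is the required witness in P(a, F). *)

Section Operators.
Variables (C : numClosedFieldType) (V : finType) (d : V -> nat).
Local Notation cfg := (cfg d).
Local Notation op := (op C d).
Implicit Types (G S T : {set V}) (s t u p q : cfg) (X Y : op).

Lemma agree_onP G s t : reflect (forall x, x \in G -> s x = t x) (agree_on G s t).
Proof.
apply: (iffP forallP) => H x; last by apply/implyP => xG; apply/eqP; apply: H.
by move=> xG; apply/eqP; apply: (implyP (H x)).
Qed.

Lemma agree_offP G s t : reflect (forall x, x \notin G -> s x = t x) (agree_off G s t).
Proof.
apply: (iffP forallP) => H x; last by apply/implyP => xG; apply/eqP; apply: H.
by move=> xG; apply/eqP; apply: (implyP (H x)).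
Qed.

Lemma agree_off_setC G s t : agree_off (~: G) s t = agree_on G s t.
Proof.
by apply/agree_offP/agree_onP => H x xG; apply: H; rewrite ?inE ?negbK in xG *.
Qed.

Lemma agree_on_setC G s t : agree_on (~: G) s t = agree_off G s t.
Proof. by apply/agree_onP/agree_offP => H x xG; apply: H; rewrite inE in xG *. Qed.

Lemma agree_on_sym G s t : agree_on G s t = agree_on G t s.
Proof. by apply/agree_onP/agree_onP => H x xG; rewrite H. Qed.

Lemma agree_off_sym G s t : agree_off G s t = agree_off G t s.
Proof. by apply/agree_offP/agree_offP => H x xG; rewrite H. Qed.

Lemma agree_on_refl G s : agree_on G s s.
Proof. exact/agree_onP. Qed.

Lemma agree_on_trans G t s u : agree_on G s t -> agree_on G t u -> agree_on G s u.
Proof. by move=> /agree_onP h1 /agree_onP h2; apply/agree_onP => x xG; rewrite h1 // h2. Qed.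

Lemma agree_onS G G' s t : G \subset G' -> agree_on G' s t -> agree_on G s t.
Proof. by move=> /subsetP sub /agree_onP H; apply/agree_onP => x /sub; apply: H. Qed.

Lemma agree_offS G G' s t : G \subset G' -> agree_off G s t -> agree_off G' s t.
Proof.
move=> /subsetP sub /agree_offP H; apply/agree_offP => x xG'; apply: H.
by apply: contra xG'; apply: sub.
Qed.

Lemma supportedP S X : reflect
  ((forall s t, ~~ agree_off S s t -> X s t = 0) /\
   (forall s t s' t', agree_off S s t -> agree_off S s' t' ->
       agree_on S s s' -> agree_on S t t' -> X s t = X s' t'))
  (supported S X).
Proof.
apply: (iffP andP) => [[/forallP H1 /forallP H2] | [H1 H2]]; split.
- move=> s t nst; have /forallP/(_ t) := H1 s.
  by rewrite (negbTE nst) => /eqP.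
- move=> s t s' t' a1 a2 a3 a4.
  have /forallP/(_ t)/forallP/(_ s')/forallP/(_ t')/implyP := H2 s.
  by rewrite a1 a2 a3 a4 => /(_ isT) /eqP.
- apply/forallP => s; apply/forallP => t.
  by case: (boolP (agree_off S s t)) => //= nst; apply/eqP; apply: H1.
- apply/forallP => s; apply/forallP => t; apply/forallP => s'; apply/forallP => t'.
  by apply/implyP => /and4P [a1 a2 a3 a4]; apply/eqP; apply: H2.
Qed.

Definition splice G s p : cfg := [ffun x => if x \in G then p x else s x].

Lemma spliceE G s p x : splice G s p x = if x \in G then p x else s x.
Proof. by rewrite ffunE. Qed.

Lemma splice_id G s : splice G s s = s.
Proof. by apply/ffunP => x; rewrite spliceE if_same. Qed.

Lemma splice_splice G s p q : splice G (splice G s p) q = splice G s q.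
Proof. by apply/ffunP => x; rewrite !spliceE; case: (x \in G). Qed.

Lemma agree_on_splice G s p : agree_on G (splice G s p) p.
Proof. by apply/agree_onP => x xG; rewrite spliceE xG. Qed.

Lemma agree_off_splice G s p : agree_off G (splice G s p) s.
Proof. by apply/agree_offP => x xG; rewrite spliceE (negbTE xG). Qed.

Lemma splice_eq G u s p : agree_on G u p -> agree_off G u s -> u = splice G s p.
Proof.
move=> /agree_onP h1 /agree_offP h2; apply/ffunP => x; rewrite spliceE.
by case: ifP => xG; [apply: h1 | apply: h2; rewrite xG].
Qed.

Lemma splice_eqE G u p : (splice G u p == u) = agree_on G u p.
Proof.
apply/eqP/agree_onP => [<- x xG | H]; first by rewrite spliceE xG.
by apply/ffunP => x; rewrite spliceE; case: ifP => // xG; rewrite H.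
Qed.

Lemma supported_sub S T X : S \subset T -> supported S X -> supported T X.
Proof.
move=> sST /supportedP [X1 X2]; apply/supportedP; split.
  by move=> s t nst; apply: X1; apply: contra nst; apply: agree_offS.
have shrink s t s' t' : agree_off T s t -> agree_on T s s' -> agree_on T t t' ->
    agree_off S s' t' -> agree_off S s t.
  move=> /agree_offP a1 /agree_onP a3 /agree_onP a4 /agree_offP a; apply/agree_offP => x xS.
  by case: (boolP (x \in T)) => xT; [rewrite a3 // a4 // a | apply: a1].
move=> s t s' t' a1 a2 a3 a4.
case: (boolP (agree_off S s t)) => ast; last first.
  rewrite !X1 //; apply: contra ast; exact: shrink.
apply: X2; rewrite ?(agree_onS sST) //.
by apply: (shrink _ _ _ _ a2) ast; rewrite agree_on_sym.
Qed.

Lemma supported_setT X : supported setT X.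
Proof.
apply/supportedP; split.
  by move=> s t /agree_offP []; move=> x; rewrite inE.
move=> s t s' t' _ _ /agree_onP a3 /agree_onP a4.
suff [-> ->] : s = s' /\ t = t' by [].
by split; apply/ffunP => x; [apply: a3 | apply: a4].
Qed.

Lemma supportedI S T X : supported S X -> supported T X -> supported (S :&: T) X.
Proof.
move=> /supportedP [H1 H2] /supportedP [K1 K2]; apply/supportedP; split.
  move=> s t nst.
  case: (boolP (agree_off S s t)) => [/agree_offP aS|]; last exact: H1.
  case: (boolP (agree_off T s t)) => [/agree_offP aT|]; last exact: K1.
  case/negP: nst; apply/agree_offP => x; rewrite inE negb_and.
  by case/orP; [apply: aS | apply: aT].
move=> s t s' t' /agree_offP a1 /agree_offP a2 /agree_onP a3 /agree_onP a4.
have -> : X s t = X (splice S s' s) (splice S t' t).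
  apply: H2; rewrite 1?agree_on_sym ?agree_on_splice //.
    by apply/agree_offP => x xS; apply: a1; rewrite inE (negbTE xS).
  by apply/agree_offP => x xS; rewrite !spliceE (negbTE xS); apply: a2; rewrite inE (negbTE xS).
apply: K2.
- apply/agree_offP => x xT; rewrite !spliceE; case: ifP => xS.
    by apply: a1; rewrite inE xS (negbTE xT).
  by apply: a2; rewrite inE xS.
- by apply/agree_offP => x xT; apply: a2; rewrite inE (negbTE xT) andbF.
- apply/agree_onP => x xT; rewrite !spliceE; case: ifP => xS //.
  by apply: a3; rewrite inE xS xT.
- apply/agree_onP => x xT; rewrite !spliceE; case: ifP => xS //.
  by apply: a4; rewrite inE xS xT.
Qed.


(* The matrix unit [|p_G><q_G|] on the sites of [G], tensored with the identity off [G]. *)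
Definition delta_op G p q : op := fun s t =>
  if [&& agree_on G s p, agree_on G t q & agree_off G s t] then 1 else 0.

Lemma delta_op_supported G p q : supported G (delta_op G p q).
Proof.
apply/supportedP; split; first by move=> s t nst; rewrite /delta_op (negbTE nst) !andbF.
move=> s t s' t' a1 a2 /agree_onP a3 /agree_onP a4; rewrite /delta_op a1 a2 !andbT.
congr (if _ then _ else _); congr andb; apply/agree_onP/agree_onP => H x xG.
- by rewrite -a3 // H.
- by rewrite a3 // H.
- by rewrite -a4 // H.
- by rewrite a4 // H.
Qed.

Lemma mul_op_delta G p q X s t :
  opmul X (delta_op G p q) s t = if agree_on G t q then X s (splice G t p) else 0.
Proof.
rewrite /opmul (bigD1 (splice G t p)) //= big1 => [|u nu]; last first.
  rewrite /delta_op; case: and3P => [[h1 h2 h3]|]; last by rewrite mulr0.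
  by case/negP: nu; apply/eqP; apply: splice_eq.
rewrite addr0 /delta_op agree_on_splice agree_off_splice /=.
by case: (agree_on G t q); rewrite ?mulr1 ?mulr0.
Qed.

Lemma mul_delta_op G p q X s t :
  opmul (delta_op G p q) X s t = if agree_on G s p then X (splice G s q) t else 0.
Proof.
rewrite /opmul (bigD1 (splice G s q)) //= big1 => [|u nu]; last first.
  rewrite /delta_op; case: and3P => [[h1 h2 h3]|]; last by rewrite mul0r.
  by case/negP: nu; apply/eqP; apply: splice_eq; rewrite // agree_off_sym.
rewrite addr0 /delta_op agree_on_splice agree_off_sym agree_off_splice /= andbT.
by case: (agree_on G s p); rewrite ?mul1r ?mul0r.
Qed.

Lemma supported_of_commute_delta G X :
  (forall p q, opmul X (delta_op G p q) = opmul (delta_op G p q) X) ->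
  supported (~: G) X.
Proof.
move=> H; apply/supportedP; split.
  move=> s t; rewrite agree_off_setC => nst.
  have /(congr1 (fun M => M s t)) := H t t.
  by rewrite mul_op_delta mul_delta_op agree_on_refl splice_id (negbTE nst).
move=> s t s' t'; rewrite !agree_off_setC !agree_on_setC.
move=> /agree_onP a1 /agree_onP a2 /agree_offP a3 /agree_offP a4.
have /(congr1 (fun M => M s t')) := H s t'.
rewrite mul_op_delta mul_delta_op !agree_on_refl.
have -> : splice G t' s = t.
  by apply/ffunP => x; rewrite spliceE; case: ifP => xG; [apply: a1 | rewrite a4 ?xG].
have -> // : splice G s t' = s'.
by apply/ffunP => x; rewrite spliceE; case: ifP => xG; [rewrite a2 | rewrite a3 ?xG].
Qed.

Lemma supported_bigcap (I : finType) (P : pred I) (F : I -> {set V}) X :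
  (forall i, P i -> supported (F i) X) -> supported (\bigcap_(i | P i) F i) X.
Proof.
move=> H; apply: (big_ind (fun S => supported S X)) => //.
  exact: supported_setT.
by move=> S T; apply: supportedI.
Qed.

Lemma supported_of_commute_sites T X :
  (forall z, z \notin T -> forall p q,
     opmul X (delta_op [set z] p q) = opmul (delta_op [set z] p q) X) ->
  supported T X.
Proof.
move=> H; have -> : T = \bigcap_(z | z \notin T) ~: [set z].
  apply/setP => y; apply/idP/bigcapP => [yT z zT | /(_ y)]; last first.
    by rewrite !inE eqxx; case: (y \in T) => // /(_ isT).
  by rewrite !inE; apply: contraNneq zT => <-.
by apply: supported_bigcap => z /H; apply: supported_of_commute_delta.
Qed.

Lemma supported_of_commutant S X :
  (forall Y, supported S Y -> opmul X Y = opmul Y X) -> supported (~: S) X.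
Proof.
move=> H; apply: supported_of_commute_sites => z; rewrite inE negbK => zS p q.
by apply: H; apply: supported_sub (delta_op_supported _ _ _); rewrite sub1set.
Qed.

Lemma noncommute_delta X x : x \in supp X ->
  exists p q, opmul X (delta_op [set x] p q) <> opmul (delta_op [set x] p q) X.
Proof.
move=> xX; apply: NNPP => nc; move: xX; apply/negP.
suff h : supported (~: [set x]) X.
  have /subsetP sub : supp X \subset ~: [set x] by apply: bigcap_inf.
  by apply/negP => /sub; rewrite !inE eqxx.
apply: supported_of_commute_delta => p q; apply: NNPP => h.
by apply: nc; exists p, q.
Qed.

(* [slice G p q X] is the partial matrix element [<p_G| X |q_G>], an operator off [G],
   tensored with the identity on [G]. *)
Definition slice G p q X : op := fun s t =>
  if agree_on G s t then X (splice G s p) (splice G t q) else 0.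

Lemma supported_setC_eq0 G Y u v : supported (~: G) Y -> ~~ agree_on G u v -> Y u v = 0.
Proof. by move=> /supportedP [Y1 _] h; apply: Y1; rewrite agree_off_setC. Qed.

Lemma supported_setC_splice G Y u v p : supported (~: G) Y -> agree_on G u v ->
  Y u v = Y (splice G u p) (splice G v p).
Proof.
move=> /supportedP [_ Y2] h; apply: Y2; rewrite ?agree_off_setC ?agree_on_setC //.
- by apply: (agree_on_trans (t := p)); rewrite ?agree_on_splice // agree_on_sym agree_on_splice.
- by rewrite agree_off_sym agree_off_splice.
- by rewrite agree_off_sym agree_off_splice.
Qed.

Lemma sum_splice G s p (g : cfg -> C) :
  (forall w, ~~ agree_on G w p -> g w = 0) ->
  \sum_w g w = \sum_u (if agree_on G u s then g (splice G u p) else 0).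
Proof.
move=> H; rewrite (bigID (fun w => agree_on G w p)) /= [X in _ + X]big1 ?addr0; last first.
  by move=> w /H.
rewrite (reindex_onto (fun u => splice G u p) (fun w => splice G w s)) /=; last first.
  by move=> w hw; rewrite splice_splice; apply/eqP; rewrite splice_eqE.
by rewrite big_mkcond; apply: eq_bigr => u _; rewrite agree_on_splice splice_splice splice_eqE.
Qed.

Lemma mul_op_slice G p q X Y s t : supported (~: G) Y ->
  opmul Y (slice G p q X) s t =
  if agree_on G s t then opmul Y X (splice G s p) (splice G t q) else 0.
Proof.
move=> hY; rewrite /opmul /slice; case: (boolP (agree_on G s t)) => ast; last first.
  apply: big1 => u _; case: (boolP (agree_on G u t)) => aut; last by rewrite mulr0.
  by rewrite (supported_setC_eq0 hY) ?mul0r //; apply: contra ast => /agree_on_trans; apply.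
rewrite (@sum_splice G s p (fun w => Y (splice G s p) w * X w (splice G t q))); last first.
  move=> w hw; rewrite (supported_setC_eq0 hY) ?mul0r //; apply: contra hw => h.
  by rewrite agree_on_sym in h; apply: agree_on_trans h _; apply: agree_on_splice.
apply: eq_bigr => u _; case: (boolP (agree_on G u s)) => aus.
  rewrite (agree_on_trans aus ast).
  by rewrite (supported_setC_splice p hY) // agree_on_sym.
by rewrite (supported_setC_eq0 hY) ?mul0r // agree_on_sym.
Qed.

Lemma mul_slice_op G p q X Y s t : supported (~: G) Y ->
  opmul (slice G p q X) Y s t =
  if agree_on G s t then opmul X Y (splice G s p) (splice G t q) else 0.
Proof.
move=> hY; rewrite /opmul /slice; case: (boolP (agree_on G s t)) => ast; last first.
  apply: big1 => u _; case: (boolP (agree_on G u t)) => aut; last first.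
    by rewrite (supported_setC_eq0 hY) ?mulr0.
  case: (boolP (agree_on G s u)) => asu; last by rewrite mul0r.
  by case/negP: ast; apply: agree_on_trans aut.
rewrite (@sum_splice G t q (fun w => X (splice G s p) w * Y w (splice G t q))); last first.
  move=> w hw; rewrite (supported_setC_eq0 hY) ?mulr0 //; apply: contra hw => h.
  by apply: agree_on_trans h _; rewrite agree_on_splice.
apply: eq_bigr => u _; case: (boolP (agree_on G u t)) => aut.
  rewrite (agree_on_trans ast _) 1?agree_on_sym //.
  by rewrite (supported_setC_splice q hY).
by rewrite (supported_setC_eq0 hY) ?mulr0.
Qed.

Lemma slice_commute G p q X Y : supported (~: G) Y ->
  opmul Y X = opmul X Y -> opmul Y (slice G p q X) = opmul (slice G p q X) Y.
Proof.
move=> hY H; do 2!apply: functional_extensionality => ?.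
by rewrite mul_op_slice // mul_slice_op // H.
Qed.

Lemma commute_of_slices G X Y : supported (~: G) Y ->
  (forall p q, opmul Y (slice G p q X) = opmul (slice G p q X) Y) ->
  opmul Y X = opmul X Y.
Proof.
move=> hY H; apply: functional_extensionality => s; apply: functional_extensionality => t.
have /(congr1 (fun M => M s (splice G t s))) := H s t.
rewrite mul_op_slice // mul_slice_op // agree_on_sym agree_on_splice.
by rewrite splice_id splice_splice splice_id.
Qed.

Lemma noncommute_slice G X Y : supported (~: G) Y -> opmul Y X <> opmul X Y ->
  exists p q, opmul Y (slice G p q X) <> opmul (slice G p q X) Y.
Proof.
move=> hY nc; apply: NNPP => ncs; apply/nc/(commute_of_slices hY) => p q.
by apply: NNPP => h; apply: ncs; exists p, q.
Qed.

Lemma supported_slice G p q T X :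
  supported T X -> supported (T :\: G) (slice G p q X).
Proof.
move=> /supportedP [X1 X2].
have onG s t : agree_off (T :\: G) s t -> agree_on G s t.
  by move=> /agree_offP h; apply/agree_onP => x xG; apply: h; rewrite inE xG.
have offT s t s1 t1 : agree_off (T :\: G) s1 t1 ->
    agree_off T (splice G s p) (splice G t q) -> agree_off T (splice G s1 p) (splice G t1 q).
  move=> /agree_offP h1 /agree_offP h2; apply/agree_offP => x xT.
  have := h2 x xT; rewrite !spliceE; case: ifP => // xG _.
  by apply: h1; rewrite inE xG.
apply/supportedP; split.
  move=> s t nst; rewrite /slice; case: ifP => // /agree_onP ast; apply: X1.
  apply: contra nst => /agree_offP h; apply/agree_offP => x; rewrite inE negb_and negbK.
  case/orP => [xG|xT]; first exact: ast.
  by have := h x xT; rewrite !spliceE; case: ifP => // xG _; apply: ast.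
move=> s t s1 t1 a1 a2 /agree_onP a3 /agree_onP a4; rewrite /slice (onG _ _ a1) (onG _ _ a2).
case: (boolP (agree_off T (splice G s p) (splice G t q))) => h; last first.
  by rewrite !X1 //; apply: contra h; apply: offT.
apply: X2 => //; first exact: offT h.
  apply/agree_onP => x xT; rewrite !spliceE; case: ifP => // xG.
  by apply: a3; rewrite inE xG.
apply/agree_onP => x xT; rewrite !spliceE; case: ifP => // xG.
by apply: a4; rewrite inE xG.
Qed.

Lemma slice_scalar S p q X s t : supported S X ->
  slice S p q X s t = if s == t then X p (splice S p q) else 0.
Proof.
move=> /supportedP [X1 X2]; rewrite /slice; case: (eqVneq s t) => [<-|nst].
  rewrite agree_on_refl; apply: X2; rewrite ?agree_on_splice //.
  - by apply/agree_offP => x xS; rewrite !spliceE (negbTE xS).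
  - by apply/agree_offP => x xS; rewrite !spliceE (negbTE xS).
  - by apply/agree_onP => x xS; rewrite !spliceE xS.
case: ifP => // /agree_onP ast; apply: X1; apply: contra nst => /agree_offP h.
apply/eqP/ffunP => x; case: (boolP (x \in S)) => xS; first exact: ast.
by have := h x xS; rewrite !spliceE (negbTE xS).
Qed.

Lemma commute_scalar (B Y : op) c : (forall u v, B u v = if u == v then c else 0) ->
  opmul Y B = opmul B Y.
Proof.
move=> hB; apply: functional_extensionality => s; apply: functional_extensionality => t.
rewrite /opmul (bigD1 t) //= big1 => [|u nu]; last by rewrite hB (negbTE nu) mulr0.
rewrite [in RHS](bigD1 s) //= [in RHS]big1 => [|u nu]; last by rewrite hB eq_sym (negbTE nu) mul0r.
by rewrite !addr0 !hB !eqxx mulrC.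
Qed.

Lemma commute_disjoint S T X Y :
  supported S X -> supported T Y -> [disjoint S & T] -> opmul Y X = opmul X Y.
Proof.
move=> hX hY dST; apply: (@commute_of_slices S).
  by apply: supported_sub hY; rewrite -disjoints_subset disjoint_sym.
by move=> p q; apply: commute_scalar => u v; apply: slice_scalar.
Qed.

Lemma morph_commute (c : op -> op) X Y :
  {morph c : A B / opmul A B} -> injective c ->
  opmul (c X) (c Y) = opmul (c Y) (c X) <-> opmul X Y = opmul Y X.
Proof. by move=> cM cI; rewrite -!cM; split=> [/cI | ->]. Qed.

End Operators.

Arguments delta_op {C V d} G p q.
Arguments delta_op_supported {C V d} G p q.

Section Locality.
Variables (V : finType) (e : rel V).
Hypothesis e_sym : symmetric e.

Lemma ball_add m n x y z : y \in ball e m x -> z \in ball e n y -> z \in ball e (m + n) x.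
Proof.
move=> hy; elim: n z => [|n IH] z /=; first by rewrite inE addn0 => /eqP ->.
rewrite addnS /= !inE => /orP [/IH -> //| /existsP [w /andP [wb ewz]]].
by apply/orP; right; apply/existsP; exists w; rewrite IH.
Qed.

Lemma ball_sym n x y : y \in ball e n x -> x \in ball e n y.
Proof.
elim: n y => [|n IH] y /=; first by rewrite !inE => /eqP ->.
rewrite !inE => /orP [/IH -> //| /existsP [w /andP [wb ewy]]].
have yw : w \in ball e 1 y.
  by rewrite /= !inE; apply/orP; right; apply/existsP; exists y; rewrite inE eqxx e_sym.
by have := ball_add yw (IH w wb); rewrite add1n /= !inE.
Qed.

Definition thicken n (S : {set V}) : {set V} := \bigcup_(y in S) ball e n y.

Lemma thicken1 n x : thicken n [set x] = ball e n x.
Proof. exact: big_set1. Qed.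

Lemma thicken_ball m n x : thicken m (ball e n x) \subset ball e (n + m) x.
Proof. by apply/bigcupsP => y hy; apply/subsetP => z; apply: ball_add. Qed.

Lemma disjoint_ball_thicken n S z : z \notin thicken n S -> [disjoint ball e n z & S].
Proof.
move=> zS; rewrite -setI_eq0; apply/eqP/setP => y; rewrite !inE.
by apply/andP => -[/ball_sym zy yS]; case/bigcupP: zS; exists y.
Qed.

Lemma disjoint_ball_Int n (F : {set V}) z : z \notin F -> [disjoint ball e n z & Int e n F].
Proof.
move=> zF; rewrite -setI_eq0; apply/eqP/setP => y; rewrite !inE.
by apply/andP => -[/ball_sym zy /subsetP /(_ z zy)]; apply/negP.
Qed.

Variables (C : numClosedFieldType) (d : V -> nat).
Local Notation op := (op C d).

Lemma supported_morph (c c' : op -> op) n S Y :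
  {morph c : A B / opmul A B} -> cancel c' c ->
  (forall z Z, supported [set z] Z -> supported (ball e n z) (c' Z)) ->
  supported S Y -> supported (thicken n S) (c Y).
Proof.
move=> cM c'K c'loc hY; apply: supported_of_commute_sites => z zS p q.
have hE := c'loc z _ (delta_op_supported _ p q).
have /(congr1 c) := commute_disjoint hE hY (disjoint_ball_thicken zS).
by rewrite !cM c'K.
Qed.

End Locality.

Section QCA.
Variables (C : numClosedFieldType) (V : finType) (e : rel V) (d : V -> nat) (R : nat).
Hypothesis e_sym : symmetric e.
Local Notation op := (op C d).
Variables (a b : op -> op).
Hypotheses (a_mul : {morph a : A B / opmul A B}) (abK : cancel a b) (baK : cancel b a).
Hypothesis a_local : forall z Z, supported [set z] Z -> supported (ball e R z) (a Z).

Lemma inv_mul : {morph b : A B / opmul A B}.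
Proof. by move=> A B; apply: (can_inj abK); rewrite a_mul !baK. Qed.

Lemma supported_inv S Y : supported S Y -> supported (thicken e R S) (b Y).
Proof. exact: (supported_morph e_sym inv_mul abK a_local). Qed.

Lemma supported_qca S Y : supported S Y -> supported (thicken e R S) (a Y).
Proof.
move=> hY; apply: (supported_morph e_sym a_mul baK _ hY) => z Z hZ.
by rewrite -thicken1; apply: supported_inv.
Qed.

(* The slice still commutes with every [a(A({z}))], z outside [F], because these are
   supported off [Int F]; so it stays in [a(A(F))]. *)
Lemma Palg_slice F p q Y : supported F Y -> Palg e R a F (slice (Int e R F) p q (a Y)).
Proof.
move=> hY; split; last first.
  have hP : supported (~: Int e R F) (slice (Int e R F) p q (a Y)).
    by rewrite -setTD; apply/supported_slice/supported_setT.
  by move=> Z hZ; apply: commute_disjoint hZ hP _; rewrite disjoints_subset setCK.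
exists (b (slice (Int e R F) p q (a Y))); split; last exact: baK.
apply: supported_of_commute_sites => z zF p' q'.
set E := delta_op (C := C) [set z] p' q'.
have hE : supported [set z] E by apply: delta_op_supported.
have haE : supported (~: Int e R F) (a E).
  apply: (supported_sub _ (a_local hE)).
  by rewrite -disjoints_subset; apply: disjoint_ball_Int.
have cYE : opmul (a E) (a Y) = opmul (a Y) (a E).
  apply/(morph_commute _ _ a_mul (can_inj abK)); apply: commute_disjoint hY hE _.
  by rewrite disjoint_sym disjoints1.
rewrite -(abK E); apply/(morph_commute _ _ inv_mul (can_inj baK)).
by symmetry; apply: slice_commute.
Qed.

Lemma Palg_visibly_simple F : visibly_simple e (2 * R) (Palg e R a F).
Proof.
move=> O [[Y [hY <-]] HO] x xO.
have [p [q ncE]] := noncommute_delta xO.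
set Q := b (delta_op [set x] p q).
have hQ : supported (ball e R x) Q.
  by rewrite -thicken1; apply/supported_inv/delta_op_supported.
have ncQ : opmul Y Q <> opmul Q Y.
  by move/(morph_commute _ _ a_mul (can_inj abK)); rewrite baK.
have hYG : supported (~: (ball e R x :\: F)) Y.
  by apply: supported_sub hY; apply/subsetP => z zF; rewrite !inE zF.
have [p' [q' ncS]] := noncommute_slice hYG ncQ.
set S := slice (ball e R x :\: F) p' q' Q.
have hS : supported (ball e R x :\: (ball e R x :\: F)) S by apply: supported_slice.
have hSF : supported F S.
  by apply: supported_sub hS; rewrite setDDr setDv set0U subsetIr.
have hSx : supported (ball e (2 * R) x) (a S).
  rewrite mul2n -addnn; apply: (supported_sub (thicken_ball _ _ _ _)).
  by apply/supported_qca/(supported_sub _ hS)/subsetDl.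
have ncA : opmul (a Y) (a S) <> opmul (a S) (a Y).
  by move/(morph_commute _ _ a_mul (can_inj abK)).
have [p'' [q'' ncP]] := noncommute_slice (supported_of_commutant HO) ncA.
exists (slice (Int e R F) p'' q'' (a S)); split => //; first exact: Palg_slice.
by apply: (supported_sub _ (supported_slice _ _ _ hSx)); apply: subsetDl.
Qed.

End QCA.

Theorem mainTheorem19 (C : numClosedFieldType) (V : finType) (e : rel V)
  (d : V -> nat) (R : nat) (a : op C d -> op C d) (F : {set V}) :
  symmetric e -> irreflexive e ->
  qca e R a ->
  visibly_simple e (2 * R) (Palg e R a F).
Proof.
move=> e_sym _ [[_ _ a_mul _ [b abK baK]] a_local].
exact: (Palg_visibly_simple e_sym a_mul abK baK a_local).
Qed.
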